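(* Let $\mathbb F$ be a field, let $A\subset\mathbb F$ be a finite set, let $n\le |A|$, and let $a_1,\dots,a_n\in\mathbb F\setminus\{0\}$ (not necessarily distinct). Let $n_1,\dots,n_t$ be the multiplicities of the distinct values occurring among $a_1,\dots,a_n$ (so $\sum_{i=1}^t n_i=n$), and put $$d:=n\big(|A|-n\big)+\sum_{1\le i<j\le t}n_in_j .$$ If $\mathbb F$ has characteristic $0$ or characteristic $p>d$, then $$\Big|\Big\{\sum_{i=1}^n a_ix_i \;:\; x_1,\dots,x_n\in A,\ x_i\ne x_j \text{ for } i\ne j\Big\}\Big|\ \ge\ d+1 .$$ *)

From HB Require Import structures.
From mathcomp Require Import all_boot all_order all_algebra.
Set Implicit Arguments. Unset Strict Implicit. Unset Printing Implicit Defensive.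
Import Order.TTheory GRing.Theory Num.Theory.

Definition mults (T : eqType) (s : seq T) : seq nat :=
  [seq count (pred1 v) s | v <- undup s].

Definition pair_prod_sum (m : seq nat) : nat :=
  (\sum_(i < size m) \sum_(j < size m | (i < j)%N) nth 0 m i * nth 0 m j)%N.

Definition dparam (F : fieldType) (n : nat) (A : seq F) (a : 'I_n -> F) : nat :=
  (n * (size A - n) + pair_prod_sum (mults [seq a i | i <- enum 'I_n]))%N.

Definition restricted_sum (F : fieldType) (n : nat) (A : seq F) (a : 'I_n -> F)
    (y : F) : Prop :=
  exists x : 'I_n -> F,
    (forall i, x i \in A) /\ injective x /\ y = (\sum_(i < n) a i * x i)%R.

From HB Require Import structures.
From mathcomp Require Import all_boot all_order all_algebra.
Import Order.TTheory GRing.Theory Num.Theory.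
From mathcomp Require Import zify ring.
From mathcomp Require Import fingroup perm.
From mathcomp.multinomials Require Import mpoly.

(* Alon's polynomial method, with an explicit coefficient formula.  Suppose the
   set S of restricted sums has at most d elements and let g be a monic
   polynomial of degree d vanishing on S.  Then
     P(x) = g(a_1 x_1 + ... + a_n x_n) * det(x_i ^ j)
   vanishes on A^n: either the x_i are distinct and the sum lies in S, or two
   rows of the Vandermonde matrix coincide.  For an exponent c with c_i < |A|
   and |c| = deg P = d + n(n-1)/2, Lason's formula expresses the coefficient of
   x^c in P as a weighted sum of values of P on A^n, so it vanishes.  It is
   also the coefficient of x^c in (sum_i a_i x_i)^d * det(x_i ^ j), which up to
   factorials is det(binom(c_i, j) a_i^(c_i - j)).  Taking c_i = |A| - 1 - r_i,
   where r_i counts the j > i with a_j = a_i, gives |c| = d + n(n-1)/2.  A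
   kernel vector of that matrix yields a polynomial of degree < |A| vanishing to
   order |A| - n at 0 and to order n_k at -b_k for each value b_k taken n_k
   times by the a_i, so it is zero and the determinant is not.  The hypothesis
   on the characteristic keeps every factorial and binomial involved nonzero. *)

Set Implicit Arguments. Unset Strict Implicit. Unset Printing Implicit Defensive.

Lemma pair_prod_sum_cons x m :
  pair_prod_sum (x :: m) = pair_prod_sum m + x * sumn m.
Proof.
rewrite /pair_prod_sum /= (big_ord_recl (size m)) addnC; congr (_ + _).
  apply: eq_bigr => i _; rewrite big_mkcond (big_ord_recl (size m)) /= add0n.
  by rewrite [RHS]big_mkcond; apply: eq_bigr.
rewrite big_mkcond (big_ord_recl (size m)) /= add0n sumnE (big_nth 0) big_mkord.
by rewrite big_distrr; apply: eq_bigr.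
Qed.

Lemma sumn_sqr m :
  sumn m ^ 2 = 2 * pair_prod_sum m + \sum_(i < size m) nth 0 m i ^ 2.
Proof.
elim: m => [|x m IHm]; first by rewrite /pair_prod_sum !big_ord0.
rewrite pair_prod_sum_cons big_ord_recl /=.
have -> : \sum_(i < size m) nth 0 (x :: m) (lift ord0 i) ^ 2 =
          \sum_(i < size m) nth 0 m i ^ 2 by apply: eq_bigr.
nia.
Qed.

Lemma double_sum_ord n : 2 * \sum_(i < n) i + n = n ^ 2.
Proof.
elim: n => [|n IHn]; first by rewrite big_ord0.
have -> : \sum_(i < n.+1) (i : nat) = \sum_(i < n) (i : nat) + n by rewrite big_ord_recr.
nia.
Qed.

Section Multiplicities.
Variable T : eqType.
Implicit Types s : seq T.

Lemma sum_undup_count s (f : T -> nat) :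
  \sum_(u <- undup s) count_mem u s * f u = \sum_(x <- s) f x.
Proof.
elim: s => [|v s IHs]; first by rewrite !big_nil.
have count_cons : \sum_(u <- undup s) count_mem u (v :: s) * f u =
    \sum_(u <- undup s) count_mem u s * f u + \sum_(u <- undup s) (v == u) * f u.
  by rewrite -big_split; apply: eq_bigr => u _; rewrite /= mulnDl addnC.
rewrite big_cons /=; case: ifP => sv.
  rewrite count_cons IHs addnC (bigD1_seq v) ?undup_uniq ?mem_undup //= eqxx.
  by rewrite mul1n big1 ?addn0 // => u /negbTE; rewrite eq_sym => ->.
rewrite big_cons /= eqxx count_cons IHs.
have -> : \sum_(u <- undup s) (v == u) * f u = 0.
  apply: big1_seq => u; rewrite mem_undup => /andP[_].
  by case: eqP => // <-; rewrite sv.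
have /eqP -> : count_mem v s == 0 by rewrite -leqn0 leqNgt -has_count has_pred1 sv.
lia.
Qed.

Lemma sumn_mults s : sumn (mults s) = size s.
Proof.
rewrite -sum1_size -(sum_undup_count s (fun=> 1)) /mults sumnE big_map.
by apply: eq_bigr => u _; rewrite muln1.
Qed.

Lemma sum_sqr_mults s :
  \sum_(i < size (mults s)) nth 0 (mults s) i ^ 2 = \sum_(x <- s) count_mem x s.
Proof.
rewrite -(sum_undup_count s (fun x => count_mem x s)).
rewrite -(big_mkord xpredT (fun i => nth 0 (mults s) i ^ 2)).
rewrite -(big_nth 0 xpredT (fun i => i ^ 2)) /mults big_map.
by apply: eq_bigr => u _; rewrite mulnn.
Qed.

Variable x0 : T.

Definition later_copies s i := count_mem (nth x0 s i) (drop i.+1 s).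

Lemma sum_later_copies s :
  \sum_(x <- s) count_mem x s = 2 * \sum_(i < size s) later_copies s i + size s.
Proof.
elim: s => [|v s IHs]; first by rewrite big_ord0 big_nil.
rewrite /= big_ord_recl big_cons /=.
have -> : \sum_(i < size s) later_copies (v :: s) (lift ord0 i) =
          \sum_(i < size s) later_copies s i by apply: eq_bigr.
have -> : \sum_(x <- s) count_mem x (v :: s) =
          \sum_(x <- s) count_mem x s + count_mem v s.
  rewrite /= big_split /= addnC; congr (_ + _).
  rewrite -sum1_count [RHS]big_mkcond; apply: eq_bigr => x _ /=.
  by rewrite eq_sym; case: eqP.
move: IHs; rewrite /later_copies /= drop0 eqxx; lia.
Qed.

Lemma pair_prod_sum_mults s :
  size s ^ 2 = 2 * pair_prod_sum (mults s) + 2 * \sum_(i < size s) later_copies s i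
               + size s.
Proof. by rewrite -{1}(sumn_mults s) sumn_sqr sum_sqr_mults sum_later_copies addnA. Qed.

Lemma later_copies_lt s i : i < size s -> later_copies s i < size s.
Proof. by move=> lt_i_s; rewrite (leq_ltn_trans (count_size _ _)) // size_drop; lia. Qed.

Lemma later_copies_onto s x r : r < count_mem x s ->
  exists2 i, i < size s & nth x0 s i = x /\ later_copies s i = r.
Proof.
elim: s r => [|v s IHs] r //=; case: (eqVneq v x) => [->|neq_vx] /=.
  rewrite add1n ltnS leq_eqVlt => /predU1P[->|/IHs[i lt_i_s [eq_x eq_r]]].
    by exists 0; rewrite // /later_copies /= drop0.
  by exists i.+1.
by rewrite add0n => /IHs[i lt_i_s eq_i]; exists i.+1.
Qed.

Lemma pair_prod_sum_mults_cases s :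
  pair_prod_sum (mults s) = 0 \/ size s - 1 <= pair_prod_sum (mults s).
Proof.
have := sumn_mults s; rewrite /mults.
case def_s: (undup s) => [|u [|v w]] /=.
- by left; rewrite /pair_prod_sum big_ord0.
- by left; rewrite pair_prod_sum_cons /pair_prod_sum big_ord0 muln0.
have in_count_gt0 y : y \in undup s -> 0 < count_mem y s.
  by rewrite mem_undup -has_count has_pred1.
have u_gt0 : 0 < count_mem u s by rewrite in_count_gt0 // def_s mem_head.
have v_gt0 : 0 < count_mem v s by rewrite in_count_gt0 // def_s !inE eqxx orbT.
by move=> sum_s; right; rewrite pair_prod_sum_cons /=; nia.
Qed.

End Multiplicities.

Lemma bin_sub_swap N j r : j + r <= N ->
  'C(N, j) * 'C(N - j, r) = 'C(N, r) * 'C(N - r, j).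
Proof.
have fact_split k l : k + l <= N ->
    'C(N, k) * 'C(N - k, l) * (k`! * l`! * (N - k - l)`!) = N`!.
  by move=> le_kl_N; rewrite -(@bin_fact N k) -?(@bin_fact (N - k) l); lia.
move=> le_jr_N; apply/eqP; rewrite -(@eqn_pmul2r (j`! * r`! * (N - j - r)`!)).
  rewrite fact_split // (subnAC N j r) -(fact_split r j); last by rewrite addnC.
  by rewrite (mulnC j`!).
by rewrite !muln_gt0 !fact_gt0.
Qed.

Section PolyRoots.
Local Open Scope ring_scope.
Variable F : fieldType.
Implicit Types (q : {poly F}) (x : F).

Lemma dvdp_XsubC_exp q x m :
  (forall r, (r < m)%N -> (q \Po ('X + x%:P))`_r = 0) -> ('X - x%:P) ^+ m %| q.
Proof.
move=> low0; set q' := q \Po ('X + x%:P).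
have /(dvdp_comp_poly ('X - x%:P)) : 'X^m %| q'.
  rewrite -(poly_take_drop m q'); have -> : take_poly m q' = 0.
    by apply/polyP => i; rewrite coef_take_poly coef0; case: ifP => // /low0.
  by rewrite add0r dvdp_mull.
by rewrite comp_polyXaddC_K comp_Xn_poly.
Qed.

Lemma size_prod_XsubC_exp (l : seq F) (k : F -> nat) :
  size (\prod_(x <- l) ('X - x%:P) ^+ k x) = (\sum_(x <- l) k x).+1.
Proof.
elim: l => [|x l IHl]; first by rewrite !big_nil size_poly1.
rewrite !big_cons size_monicM ?monic_exp ?monicXsubC ?monic_neq0 //.
  by rewrite size_exp_XsubC IHl addSn addnS.
by apply: monic_prod => y _; apply/monic_exp/monicXsubC.
Qed.

Lemma prod_XsubC_exp_dvdp q (l : seq F) (k : F -> nat) : uniq l ->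
  (forall x, x \in l -> ('X - x%:P) ^+ k x %| q) ->
  \prod_(x <- l) ('X - x%:P) ^+ k x %| q.
Proof.
elim: l => [|x l IHl] /=; first by rewrite big_nil dvd1p.
move=> /andP[x_notin_l uniq_l] dvd_q; rewrite big_cons Gauss_dvdp.
- by rewrite dvd_q ?mem_head // IHl // => y l_y; rewrite dvd_q // inE l_y orbT.
apply/coprimep_expl; rewrite coprimep_sym coprimep_XsubC /root horner_prod.
rewrite prodf_seq_neq0; apply/allP => y l_y /=.
by rewrite horner_exp hornerXsubC expf_neq0 // subr_eq0; apply: contraNneq x_notin_l => ->.
Qed.

Lemma coef_XaddC_exp x e r : (('X + x%:P) ^+ e)`_r = 'C(e, r)%:R * x ^+ (e - r).
Proof.
rewrite addrC exprDn coef_sum.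
under eq_bigr => i _ do rewrite coefMn -polyC_exp coefCM coefXn.
have [lt_r_e1|le_e_r] := ltnP r e.+1; last first.
  rewrite bin_small // mul0r big1 // => i _.
  by rewrite (_ : r == i = false) ?mulr0 ?mul0rn //; have := ltn_ord i; lia.
rewrite (bigD1 (Ordinal lt_r_e1)) //= eqxx mulr1 big1 ?addr0 ?mulr_natl // => i.
by rewrite -val_eqE eq_sym => /negbTE /= ->; rewrite mulr0 mul0rn.
Qed.

End PolyRoots.

Section BinomialMatrix.
Local Open Scope ring_scope.
Variables (F : fieldType) (n N : nat).
Hypothesis le_n_N1 : (n <= N.+1)%N.

(* Row [i] lists the coefficients of 'X^0, ..., 'X^(n-1) in ('X + b i)^(c i). *)
Definition binom_mx (c : 'I_n -> nat) (b : 'I_n -> F) : 'M[F]_n :=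
  \matrix_(i, j) ('C(c i, j)%:R * b i ^+ (c i - j)).

Definition kernel_poly (v : 'I_n -> F) : {poly F} :=
  \sum_(j < n) ((-1) ^+ j * 'C(N, j)%:R * v j) *: 'X^(N - j).

Variable v : 'I_n -> F.

Lemma ord_leN (j : 'I_n) : (j <= N)%N.
Proof. by have := ltn_ord j; lia. Qed.

Lemma coef_kernel_poly k :
  (kernel_poly v)`_k = \sum_(j < n | (N - j == k)%N) (-1) ^+ j * 'C(N, j)%:R * v j.
Proof. exact: coef_sumMXn. Qed.

Lemma size_kernel_poly : (size (kernel_poly v) <= N.+1)%N.
Proof.
rewrite /kernel_poly; apply: (big_ind (fun p : {poly F} => size p <= N.+1)%N).
- by rewrite size_poly0.
- by move=> p q p_le q_le; rewrite (leq_trans (size_polyD _ _)) // geq_max p_le.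
by move=> j _; rewrite (leq_trans (size_scale_leq _ _)) // size_polyXn ltnS leq_subr.
Qed.

Lemma coef_kernel_poly_low k : (k < N.+1 - n)%N -> (kernel_poly v)`_k = 0.
Proof.
move=> lt_k; rewrite coef_kernel_poly big_pred0 // => j.
by apply/negbTE/eqP; have := ltn_ord j; lia.
Qed.

Lemma coef_kernel_poly_shift x r : (r <= N)%N ->
  (kernel_poly v \Po ('X - x%:P))`_r =
  (-1) ^+ (N - r) * 'C(N, r)%:R *
    \sum_(j < n) 'C(N - r, j)%:R * x ^+ (N - r - j) * v j.
Proof.
move=> le_r_N; rewrite raddf_sum coef_sum big_distrr /=; apply: eq_bigr => j _.
rewrite linearZ /= comp_Xn_poly coefZ -polyCN coef_XaddC_exp.
have [le_j_Nr|lt_Nr_j] := leqP j (N - r); last first.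
  rewrite (@bin_small (N - j) r); last by have := ord_leN j; lia.
  by rewrite (bin_small lt_Nr_j) !(mul0r, mulr0).
rewrite (subnAC N j r) [(- x) ^+ _]exprNn.
have sign : (-1) ^+ j * (-1) ^+ (N - r - j) = (-1) ^+ (N - r) :> F.
  by rewrite -exprD subnKC.
have le_jr_N : (j + r <= N)%N by lia.
have := congr1 (fun k => k%:R : F) (bin_sub_swap le_jr_N); rewrite !natrM => swap_bin.
rewrite -sign; transitivity ((-1) ^+ j * (-1) ^+ (N - r - j) *
  ('C(N, j)%:R * 'C(N - j, r)%:R) * x ^+ (N - r - j) * v j); first by ring.
by rewrite swap_bin; ring.
Qed.

Variables (b : 'I_n -> F) (rk : 'I_n -> nat).
Hypothesis b_neq0 : forall i, b i != 0.
Hypothesis le_rk_N : forall i, (rk i <= N)%N.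
Hypothesis rk_onto : forall i r, (r < count_mem (b i) [seq b j | j <- enum 'I_n])%N ->
  exists i', b i' = b i /\ rk i' = r.

(* [kernel_poly v] is divisible by 'X^(N.+1 - n) and by ('X + b i)^(n_i) for each
   distinct value b i of multiplicity n_i: too many roots for its degree. *)
Lemma kernel_poly_eq0 :
  (forall i, \sum_(j < n) 'C(N - rk i, j)%:R * b i ^+ (N - rk i - j) * v j = 0) ->
  kernel_poly v = 0.
Proof.
move=> ker_v; set s := [seq b j | j <- enum 'I_n].
pose roots := 0 :: [seq - y | y <- undup s].
pose mult x := if x == 0 then (N.+1 - n)%N else count_mem (- x) s.
have s_neq0 y : y \in s -> y != 0 by case/mapP => i _ ->.
have uniq_roots : uniq roots.
  rewrite /roots /= (map_inj_uniq oppr_inj) undup_uniq andbT.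
  apply/mapP => -[y]; rewrite mem_undup => /s_neq0 y_neq0 /eqP.
  by rewrite eq_sym oppr_eq0 (negbTE y_neq0).
have dvd_q : \prod_(x <- roots) ('X - x%:P) ^+ mult x %| kernel_poly v.
  apply: prod_XsubC_exp_dvdp => // x; rewrite inE => /predU1P[-> | /mapP[y]].
    rewrite /mult eqxx; apply: dvdp_XsubC_exp => r lt_r.
    by rewrite addr0 comp_polyXr coef_kernel_poly_low.
  rewrite mem_undup => /mapP[i _ ->] ->.
  rewrite /mult oppr_eq0 (negbTE (b_neq0 i)) opprK; apply: dvdp_XsubC_exp => r lt_r.
  have [i' [<- <-]] := rk_onto lt_r.
  by rewrite polyCN coef_kernel_poly_shift ?ker_v ?mulr0.
have sum_mult : (\sum_(x <- roots) mult x = N.+1)%N.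
  rewrite big_cons big_map /mult eqxx.
  rewrite (eq_big_seq (fun y => count_mem y s * 1)%N) => [|y]; last first.
    by rewrite mem_undup => /s_neq0 /negbTE; rewrite oppr_eq0 => ->; rewrite opprK muln1.
  by rewrite sum_undup_count sum1_size size_map size_enum_ord subnK.
apply/eqP/negPn/negP => q_neq0.
have := dvdp_leq q_neq0 dvd_q; rewrite size_prod_XsubC_exp sum_mult.
by move/leq_trans/(_ size_kernel_poly); rewrite ltnn.
Qed.

End BinomialMatrix.

Section BinomialDeterminant.
Local Open Scope ring_scope.

Lemma det_binom_mx_neq0 (F : fieldType) (n N : nat) (b : 'I_n -> F) (rk : 'I_n -> nat) :
  (n <= N.+1)%N -> (forall j : 'I_n, 'C(N, j)%:R != 0 :> F) ->
  (forall i, b i != 0) -> (forall i, (rk i <= N)%N) ->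
  (forall i r, (r < count_mem (b i) [seq b j | j <- enum 'I_n])%N ->
     exists i', b i' = b i /\ rk i' = r) ->
  \det (binom_mx (fun i => N - rk i)%N b) != 0.
Proof.
move=> le_n_N1 binN_neq0 b_neq0 le_rk_N rk_onto; rewrite -det_tr.
apply/negP => /det0P[v v_neq0 vB0]; apply/negP: v_neq0; apply/negPn/eqP/rowP => j.
have ker_v i : \sum_(j < n) 'C(N - rk i, j)%:R * b i ^+ (N - rk i - j) * v 0 j = 0.
  have := congr1 (fun M : 'rV_n => M 0 i) vB0; rewrite !mxE => {2}<-.
  by apply: eq_bigr => k _; rewrite !mxE mulrC.
have := kernel_poly_eq0 le_n_N1 b_neq0 le_rk_N rk_onto ker_v.
move/(congr1 (fun p : {poly F} => p`_(N - j))).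
rewrite coef0 coef_kernel_poly (big_pred1 j) => [|k] /=; last first.
  have := ord_leN le_n_N1 j; have := ord_leN le_n_N1 k.
  by move=> le_k le_j; apply/eqP/eqP => [eq_N|-> //]; apply: val_inj => /=; lia.
move/eqP; rewrite !mulf_eq0 signr_eq0 (negbTE (binN_neq0 j)) mxE /=.
by move/eqP.
Qed.

End BinomialDeterminant.

Section LagrangeInterpolation.
Local Open Scope ring_scope.
Variables (F : fieldType) (m : nat) (z : nat -> F).
Hypothesis z_inj : forall i j : 'I_m.+1, z i = z j -> i = j.

Let denom (j : 'I_m.+1) := \prod_(l < m.+1 | l != j) (z j - z l).
Let basis (j : 'I_m.+1) : {poly F} := \prod_(l < m.+1 | l != j) ('X - (z l)%:P).

Let denom_neq0 j : denom j != 0.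
Proof.
rewrite prodf_seq_neq0; apply/allP => l _; apply/implyP => neq_lj.
by rewrite subr_eq0; apply: contra neq_lj => /eqP /z_inj ->.
Qed.

Let size_basis j : size (basis j) = m.+1.
Proof.
rewrite /basis -big_filter size_prod_XsubC size_filter.
by have := cardC1 j; rewrite card_ord cardE /enum_mem size_filter => ->.
Qed.

Let horner_basis j (k : 'I_m.+1) : (basis j).[z k] = if k == j then denom k else 0.
Proof.
rewrite /basis horner_prod; case: eqP => [->|/eqP neq_kj].
  by apply: eq_bigr => l _; rewrite hornerXsubC.
by rewrite (bigD1 k) //= hornerXsubC subrr mul0r.
Qed.

Lemma lagrange_interpolation (p : {poly F}) : (size p <= m.+1)%N ->
  p = \sum_(j < m.+1) (p.[z j] / denom j) *: basis j.
Proof.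
move=> size_p; apply/eqP; rewrite -subr_eq0; apply/negPn/negP => diff_neq0.
set diff := _ - _ in diff_neq0.
have size_diff : (size diff <= m.+1)%N.
  rewrite (leq_trans (size_polyD _ _)) // geq_max size_p size_polyN.
  apply: (big_ind (fun q : {poly F} => size q <= m.+1)%N) => [|q q' q_le q'_le|j _].
  - by rewrite size_poly0.
  - by rewrite (leq_trans (size_polyD _ _)) // geq_max q_le.
  by rewrite (leq_trans (size_scale_leq _ _)) // size_basis.
have diff_roots : all (root diff) [seq z k | k : 'I_m.+1].
  apply/allP => _ /mapP[k _ ->]; rewrite /root hornerD hornerN horner_sum.
  rewrite (bigD1 k) //= hornerZ horner_basis eqxx divfK // big1 ?addr0 ?subrr //.
  by move=> j neq_jk; rewrite hornerZ horner_basis eq_sym (negbTE neq_jk) mulr0.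
have := max_poly_roots diff_neq0 diff_roots.
rewrite map_inj_uniq ?enum_uniq => [|i j /z_inj //].
by rewrite size_map size_enum_ord ltnNge size_diff => /(_ isT).
Qed.

Lemma sum_exp_div_prod_sub e : (e <= m)%N ->
  \sum_(j < m.+1) z j ^+ e / \prod_(l < m.+1 | l != j) (z j - z l) = (e == m)%:R.
Proof.
move=> le_e_m; have size_Xe : (size ('X^e : {poly F}) <= m.+1)%N by rewrite size_polyXn.
have := congr1 (fun p : {poly F} => p`_m) (lagrange_interpolation size_Xe).
rewrite coefXn eq_sym coef_sum => ->; apply: eq_bigr => j _.
have /monicP : basis j \is monic by apply: monic_prod => l _; apply: monicXsubC.
by rewrite coefZ hornerXn /lead_coef size_basis => ->; rewrite mulr1.
Qed.

End LagrangeInterpolation.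

Section LinearFormVandermonde.
Local Open Scope ring_scope.
Variables (F : fieldType) (n : nat) (a : 'I_n -> F).

Definition lin_form : {mpoly F[n]} := \sum_(i < n) a i *: 'X_i.

Definition perm_mnm (s : 'S_n) : 'X_{1..n} := [multinom (s i : nat) | i < n].

Definition vdm_mpoly : {mpoly F[n]} := \sum_(s : 'S_n) (-1) ^+ s *: 'X_[perm_mnm s].

Lemma mcoeffMX_le (p : {mpoly F[n]}) m k :
  (p * 'X_[m])@_k = if (m <= k)%MM then p@_(k - m) else 0.
Proof.
case: ifP => [le_mk|not_le_mk]; first by rewrite -{1}(submK le_mk) addmC mcoeffMX.
apply: memN_msupp_eq0; rewrite (perm_mem (msuppMX p m)).
by apply/mapP => -[m' _ eq_k]; move: not_le_mk; rewrite eq_k lem_addr.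
Qed.

Lemma mcoeff_lin_formS j k : (lin_form ^+ j.+1)@_k =
  \sum_(i < n) a i * (if (U_(i) <= k)%MM then (lin_form ^+ j)@_(k - U_(i)) else 0).
Proof.
rewrite exprSr mulr_sumr raddf_sum /=; apply: eq_bigr => i _.
by rewrite -scalerAr mcoeffZ mcoeffMX_le.
Qed.

Lemma mdeg_perm_mnm s : mdeg (perm_mnm s) = (\sum_(i < n) i)%N.
Proof.
rewrite mdegE; under eq_bigr do rewrite mnmE.
by rewrite [RHS](reindex_inj (@perm_inj _ s)).
Qed.

Lemma lin_form_homog : lin_form \is 1.-homog.
Proof.
by apply: rpred_sum => i _; apply: dhomogZ; rewrite dhomogX /= mdeg1.
Qed.

Lemma vdm_mpoly_homog : vdm_mpoly \is (\sum_(i < n) i)%N.-homog.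
Proof.
by apply: rpred_sum => s _; apply: dhomogZ; rewrite dhomogX /= mdeg_perm_mnm.
Qed.

Lemma mcoeff_lin_form_vdm_eq0 j m : (mdeg m != j + \sum_(i < n) i)%N ->
  (lin_form ^+ j * vdm_mpoly)@_m = 0.
Proof.
apply: dhomog_nemf_coeff; apply: dhomogM vdm_mpoly_homog.
by have := dhomogMn j lin_form_homog; rewrite mul1n.
Qed.

Lemma mcoeff_lin_form_exp j k : (lin_form ^+ j)@_k * \prod_(i < n) (k i)`!%:R =
  (mdeg k == j)%:R * j`!%:R * \prod_(i < n) a i ^+ k i.
Proof.
elim: j k => [|j IHj] k.
  rewrite expr0 mcoeff1; have [->|k_neq0] := eqVneq k 0%MM.
    by rewrite mdeg0 !big1 ?mulr1 // => i _; rewrite mnm0E.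
  by rewrite mdeg_eq0 (negbTE k_neq0) !mul0r.
rewrite mcoeff_lin_formS big_distrl /=.
transitivity (\sum_(i < n) (k i)%:R *
    ((mdeg k == j.+1)%:R * j`!%:R * \prod_(l < n) a l ^+ k l)); last first.
  rewrite -big_distrl /= -natr_sum -mdegE.
  case: eqP => [->|_]; last by rewrite !mul0r mulr0.
  by rewrite factS natrM; ring.
apply: eq_bigr => i _; case: ifP => [le_Ui_k|]; last first.
  by rewrite lep1mP => /negbFE /eqP ->; rewrite mulr0 !mul0r.
set k' := (k - U_(i))%MM.
have k_i : k i = (k' i).+1.
  by rewrite /k' mnmBE mnm1E eqxx; move: le_Ui_k; rewrite lep1mP; lia.
have k_l l : l != i -> k' l = k l.
  by move=> neq_li; rewrite /k' mnmBE mnm1E eq_sym (negbTE neq_li) subn0.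
have mdeg_k : mdeg k = (mdeg k').+1.
  by rewrite /k' -{1}(submK le_Ui_k) mdegD mdeg1 addn1.
have fact_k : \prod_(l < n) (k l)`!%:R = (k i)%:R * \prod_(l < n) (k' l)`!%:R :> F.
  rewrite (bigD1 i) //= [in RHS](bigD1 i) //= k_i factS natrM mulrA; congr (_ * _).
  by apply: eq_bigr => l neq_li; rewrite k_l.
have pow_k : \prod_(l < n) a l ^+ k l = a i * \prod_(l < n) a l ^+ k' l.
  rewrite (bigD1 i) //= [in RHS](bigD1 i) //= k_i exprS mulrA; congr (_ * _).
  by apply: eq_bigr => l neq_li; rewrite k_l.
rewrite fact_k pow_k mdeg_k eqSS.
transitivity (a i * (k i)%:R * ((lin_form ^+ j)@_k' * \prod_(l < n) (k' l)`!%:R)).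
  by ring.
by rewrite IHj; ring.
Qed.

Lemma mcoeffM_vdm_mpoly (p : {mpoly F[n]}) m : (p * vdm_mpoly)@_m =
  \sum_(s : 'S_n) (-1) ^+ s * (if (perm_mnm s <= m)%MM then p@_(m - perm_mnm s) else 0).
Proof.
rewrite mulr_sumr raddf_sum /=; apply: eq_bigr => s _.
by rewrite -scalerAr mcoeffZ mcoeffMX_le.
Qed.

Lemma mcoeff_lin_form_exp_vdm (c : 'X_{1..n}) d :
  mdeg c = (d + \sum_(i < n) i)%N ->
  (lin_form ^+ d * vdm_mpoly)@_c * \prod_(i < n) (c i)`!%:R =
  d`!%:R * \prod_(i < n) i`!%:R * \det (binom_mx c a).
Proof.
move=> mdeg_c; rewrite mcoeffM_vdm_mpoly big_distrl /= /determinant mulr_sumr.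
apply: eq_bigr => s _; under [X in _ = _ * (_ * X)]eq_bigr do rewrite mxE.
case: ifP => [le_s_c|not_le_s_c]; last first.
  have [i lt_c_s] : exists i, (c i < s i)%N.
    apply/existsP; apply: contraFT not_le_s_c; rewrite negb_exists => /forallP le_s.
    by apply/mnm_lepP => i; rewrite mnmE leqNgt le_s.
  by rewrite [X in _ = _ * (_ * X)](bigD1 i) //= bin_small // !(mul0r, mulr0).
set k := (c - perm_mnm s)%MM.
have mdeg_k : mdeg k = d.
  by move: mdeg_c; rewrite -(submK le_s_c) -/k mdegD mdeg_perm_mnm; lia.
have k_i i : k i = (c i - s i)%N by rewrite /k mnmBE mnmE.
have le_s_c_i i : (s i <= c i)%N by move/mnm_lepP: le_s_c => /(_ i); rewrite mnmE.
have fact_c : \prod_(i < n) (c i)`!%:R = \prod_(i < n) (k i)`!%:R *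
    (\prod_(i < n) 'C(c i, s i)%:R * \prod_(i < n) (s i)`!%:R) :> F.
  rewrite -!big_split /=; apply: eq_bigr => i _.
  by rewrite k_i -(bin_fact (le_s_c_i i)) !natrM; ring.
have fact_s : \prod_(i < n) (s i)`!%:R = \prod_(i < n) i`!%:R :> F.
  by rewrite [RHS](reindex_inj (@perm_inj _ s)).
have binom_c : \prod_(i < n) ('C(c i, s i)%:R * a i ^+ (c i - s i)) =
    \prod_(i < n) 'C(c i, s i)%:R * \prod_(i < n) a i ^+ k i.
  by rewrite -big_split /=; apply: eq_bigr => i _; rewrite k_i.
rewrite fact_c fact_s binom_c; have := mcoeff_lin_form_exp d k; rewrite mdeg_k eqxx mul1r.
move: ((-1) ^+ s) ((lin_form ^+ d)@_k) (\prod_(i < n) (k i)`!%:R) => sgn coef fact_k coefE.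
transitivity (sgn * (coef * fact_k) * \prod_(i < n) 'C(c i, s i)%:R *
  \prod_(i < n) i`!%:R); first by ring.
by rewrite coefE; ring.
Qed.

Lemma meval_lin_form (x : 'I_n -> F) : lin_form.@[x] = \sum_(i < n) a i * x i.
Proof. by rewrite raddf_sum /=; apply: eq_bigr => i _; rewrite mevalZ mevalXU. Qed.

Lemma meval_vdm_mpoly (x : 'I_n -> F) :
  vdm_mpoly.@[x] = \det (\matrix_(i, j) x i ^+ j : 'M[F]_n).
Proof.
rewrite raddf_sum /= /determinant; apply: eq_bigr => s _.
by rewrite mevalZ mevalX; congr (_ * _); apply: eq_bigr => i _; rewrite mxE mnmE.
Qed.

Lemma meval_poly_lin_form_vdm (g : {poly F}) (x : 'I_n -> F) :
  ((\sum_(j < size g) g`_j *: lin_form ^+ j) * vdm_mpoly).@[x] =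
  g.[\sum_(i < n) a i * x i] * \det (\matrix_(i, j) x i ^+ j : 'M[F]_n).
Proof.
rewrite mevalM meval_vdm_mpoly raddf_sum /= horner_coef; congr (_ * _).
by apply: eq_bigr => j _; rewrite mevalZ rmorphXn /= meval_lin_form.
Qed.

End LinearFormVandermonde.

Lemma mnm_lt_of_mdeg_le n (m c : 'X_{1..n}) :
  m != c -> (mdeg m <= mdeg c)%N -> exists i, (m i < c i)%N.
Proof.
move=> neq_mc le_mdeg; apply/existsP; apply: contraNT neq_mc.
rewrite negb_exists => /forallP ge_m_c.
have le_cm : (c <= m)%MM by apply/mnm_lepP => i; rewrite leqNgt ge_m_c.
have /eqP : mdeg (m - c) = 0%N by have := mdegD (m - c) c; rewrite submK //; lia.
by rewrite mdeg_eq0 => /eqP diff0; rewrite -(submK le_cm) diff0 add0m.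
Qed.

Section CoefficientFormula.
Local Open Scope ring_scope.
Variables (F : fieldType) (n K : nat) (z : nat -> F) (c : 'X_{1..n}).
Hypothesis lt_c_K : forall i, (c i < K)%N.
Hypothesis z_inj : forall i j, (i < K)%N -> (j < K)%N -> z i = z j -> i = j.

(* The weight of [z j] on the [i]-th axis is [1 / phi'(z j)] for the polynomial
   [phi = prod_(l <= c i) ('X - z l)], and [0] for [j > c i]. *)
Definition grid_weight (i : 'I_n) (j : nat) : F :=
  if (j <= c i)%N then (\prod_(l < (c i).+1 | (l : nat) != j) (z j - z l))^-1 else 0.

Definition grid_sum (p : {mpoly F[n]}) : F :=
  \sum_(t : {ffun 'I_n -> 'I_K}) p.@[fun i => z (t i)] * \prod_(i < n) grid_weight i (t i).

Definition grid_moment (i : 'I_n) (e : nat) : F :=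
  \sum_(j < K) z j ^+ e * grid_weight i j.

Lemma grid_moment_small i e : (e <= c i)%N -> grid_moment i e = (e == c i)%:R.
Proof.
move=> le_e_c; pose G (j : nat) :=
  z j ^+ e * (\prod_(l < (c i).+1 | (l : nat) != j) (z j - z l))^-1.
transitivity (\sum_(j < K | (j < (c i).+1)%N) G j).
  rewrite [RHS]big_mkcond; apply: eq_bigr => j _; rewrite /grid_weight /G ltnS.
  by case: ifP; rewrite ?mulr0.
rewrite -(big_ord_widen _ G (lt_c_K i)) -(sum_exp_div_prod_sub (z := z)) // => j l eq_z.
apply: val_inj; apply: (z_inj _ _ eq_z); exact: leq_trans (ltn_ord _) (lt_c_K i).
Qed.

Lemma grid_sum_monomial (m : 'X_{1..n}) :
  \sum_(t : {ffun 'I_n -> 'I_K})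
    (\prod_(i < n) z (t i) ^+ m i) * \prod_(i < n) grid_weight i (t i) =
  \prod_(i < n) grid_moment i (m i).
Proof. by rewrite bigA_distr_bigA; apply: eq_bigr => t _; rewrite -big_split. Qed.

Lemma grid_sum_coef (p : {mpoly F[n]}) :
  (forall m, p@_m != 0 -> (mdeg m <= mdeg c)%N) -> grid_sum p = p@_c.
Proof.
move=> deg_p.
transitivity (\sum_(m <- msupp p) p@_m * \prod_(i < n) grid_moment i (m i)).
  rewrite /grid_sum; under eq_bigr do rewrite mevalE big_distrl /=.
  rewrite exchange_big /=; apply: eq_bigr => m _.
  by rewrite -grid_sum_monomial big_distrr /=; apply: eq_bigr => t _; rewrite mulrA.
transitivity (\sum_(m <- msupp p) p@_m * (m == c)%:R).
  apply: eq_big_seq => m; rewrite mcoeff_msupp => p_m_neq0.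
  have [->|neq_mc] := eqVneq m c.
    by rewrite big1 // => i _; rewrite grid_moment_small // eqxx.
  have [i lt_mc] := mnm_lt_of_mdeg_le neq_mc (deg_p m p_m_neq0).
  by rewrite (bigD1 i) //= grid_moment_small ?(ltnW lt_mc) // (ltn_eqF lt_mc) mul0r.
rewrite [in RHS](mpolyE p) raddf_sum /=; apply: eq_bigr => m _.
by rewrite mcoeffZ mcoeffX.
Qed.

End CoefficientFormula.

Section CharacteristicBound.
Local Open Scope ring_scope.
Variables (F : fieldType) (d : nat).
Hypothesis char_gt_d : [pchar F] =i pred0 \/ exists p, p \in [pchar F] /\ (d < p)%N.

Lemma natr_neq0_le m : (0 < m)%N -> (m <= d)%N -> m%:R != 0 :> F.
Proof.
move=> m_gt0 le_m_d; case: char_gt_d => [/pcharf0P -> | [p [char_p lt_d_p]]].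
  by rewrite -lt0n.
rewrite -(dvdn_pcharf char_p); apply: contraTN lt_d_p => /(dvdn_leq m_gt0) le_p_m.
by rewrite -leqNgt (leq_trans le_p_m).
Qed.

Lemma fact_natr_neq0 m : (m <= d)%N -> m`!%:R != 0 :> F.
Proof.
elim: m => [|m IHm] le_m_d; first by rewrite oner_eq0.
rewrite factS natrM mulf_neq0 //; first exact: natr_neq0_le.
exact/IHm/ltnW.
Qed.

Lemma bin_natr_neq0 N j : (N <= d)%N -> (j <= N)%N -> 'C(N, j)%:R != 0 :> F.
Proof.
move=> le_N_d le_j_N; apply: contra_neq (fact_natr_neq0 le_N_d) => bin0.
by rewrite -(bin_fact le_j_N) !natrM bin0 !mul0r.
Qed.

End CharacteristicBound.

Section RestrictedSums.
Local Open Scope ring_scope.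
Variables (F : fieldType) (A : seq F) (n : nat) (a : 'I_n -> F).

Definition restricted_sums : seq F :=
  undup [seq \sum_(i < n) a i * nth 0 A (t i) | t : {ffun 'I_n -> 'I_(size A)} <-
           enum [pred t : {ffun 'I_n -> 'I_(size A)} | injectiveb t]].

Lemma mem_restricted_sums (t : {ffun 'I_n -> 'I_(size A)}) : injectiveb t ->
  \sum_(i < n) a i * nth 0 A (t i) \in restricted_sums.
Proof. by move=> inj_t; rewrite mem_undup map_f ?mem_enum. Qed.

Section DistinctPoints.
Hypothesis uniq_A : uniq A.

Let nth_inj i j : (i < size A)%N -> (j < size A)%N -> nth 0 A i = nth 0 A j -> i = j.
Proof. by move=> lt_i lt_j /eqP; rewrite nth_uniq // => /eqP. Qed.

Lemma restricted_sumsP y : y \in restricted_sums -> restricted_sum A a y.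
Proof.
rewrite mem_undup => /mapP[t]; rewrite mem_enum => /injectiveP inj_t ->.
exists (fun i => nth 0 A (t i)); split=> [i|]; first exact: mem_nth.
by split=> // i j /nth_inj eq_t; apply/inj_t/val_inj/eq_t.
Qed.

Lemma mcoeff_lin_form_vdm_few_sums d (c : 'X_{1..n}) :
  (size restricted_sums <= d)%N -> (forall i, (c i < size A)%N) ->
  mdeg c = (d + \sum_(i < n) i)%N -> (lin_form a ^+ d * vdm_mpoly F n)@_c = 0.
Proof.
move=> small_S lt_c_A mdeg_c; set S := restricted_sums in small_S *.
pose g := \prod_(y <- S) ('X - y%:P) * 'X^(d - size S).
have monic_g : g \is monic by rewrite monicMl ?monic_prod_XsubC ?monicXn.
have size_g : size g = d.+1.
  rewrite size_monicM ?monic_prod_XsubC ?monic_neq0 ?monicXn //.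
  by rewrite size_prod_XsubC size_polyXn; lia.
have lead_g : g`_d = 1 by move/monicP: monic_g; rewrite /lead_coef size_g.
pose P := (\sum_(j < size g) g`_j *: lin_form a ^+ j) * vdm_mpoly F n.
have coef_P m : P@_m = \sum_(j < size g) g`_j * (lin_form a ^+ j * vdm_mpoly F n)@_m.
  by rewrite /P mulr_suml raddf_sum /=; apply: eq_bigr => j _; rewrite -scalerAl mcoeffZ.
have deg_P m : P@_m != 0 -> (mdeg m <= mdeg c)%N.
  rewrite coef_P; apply: contraR; rewrite -ltnNge => lt_c_m; apply/eqP/big1 => j _.
  have lt_j_d1 : (j < d.+1)%N by rewrite -size_g.
  by rewrite mcoeff_lin_form_vdm_eq0 ?mulr0 //; lia.
have lt_d_g : (d < size g)%N by rewrite size_g.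
have P_c : P@_c = (lin_form a ^+ d * vdm_mpoly F n)@_c.
  rewrite coef_P (bigD1 (Ordinal lt_d_g)) //= lead_g mul1r big1 ?addr0 // => j neq_jd.
  rewrite mcoeff_lin_form_vdm_eq0 ?mulr0 // mdeg_c eqn_add2r.
  by apply: contraNneq neq_jd => eq_jd; apply/eqP/val_inj.
rewrite -P_c -(grid_sum_coef lt_c_A nth_inj deg_P); apply: big1 => t _.
rewrite meval_poly_lin_form_vdm.
have [inj_t|/injectivePn[i [j neq_ij eq_t]]] := boolP (injectiveb t).
  rewrite /g hornerM horner_prod (big_rem _ (mem_restricted_sums inj_t)) /=.
  by rewrite hornerXsubC subrr !mul0r.
by rewrite (determinant_alternate neq_ij) ?mulr0 ?mul0r // => k; rewrite !mxE eq_t.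
Qed.

End DistinctPoints.

Hypothesis le_n_A : (n <= size A)%N.

Lemma size_restricted_sums_gt0 : (0 < size restricted_sums)%N.
Proof.
pose t0 := [ffun i : 'I_n => widen_ord le_n_A i].
have inj_t0 : injectiveb t0.
  by apply/injectiveP => i j; rewrite !ffunE => /(congr1 val) /= /val_inj.
rewrite lt0n size_eq0; apply: contraTneq (mem_restricted_sums inj_t0) => ->.
by rewrite in_nil.
Qed.

Let s := [seq a i | i <- enum 'I_n].

Let size_s : size s = n.
Proof. by rewrite size_map size_enum_ord. Qed.

Let rk (i : 'I_n) : nat := later_copies 0 s i.

Let rk_lt_n i : (rk i < n)%N.
Proof. by rewrite -size_s later_copies_lt // size_s. Qed.

(* The copies of each value a_i get the exponents |A|-1, |A|-2, ..., |A|-n_i. *)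
Definition sumset_exponent : 'X_{1..n} :=
  [multinom ((size A).-1 - rk i)%N | i < n].

Lemma sumset_exponent_lt i : (sumset_exponent i < size A)%N.
Proof. by rewrite mnmE; have := ltn_ord i; lia. Qed.

Lemma mdeg_sumset_exponent :
  mdeg sumset_exponent = (dparam A a + \sum_(i < n) i)%N.
Proof.
have sum_c : (mdeg sumset_exponent + \sum_(i < n) rk i = n * (size A).-1)%N.
  rewrite mdegE -big_split /= (eq_bigr (fun=> (size A).-1)) => [|i _].
    by rewrite sum_nat_const card_ord.
  by rewrite mnmE subnK //; have := rk_lt_n i; lia.
have e1 : (n * (size A - n) + n ^ 2 = n * size A)%N by rewrite -mulnn -mulnDr subnK.
have e2 : (n * (size A).-1 + n = n * size A)%N.
  by have [-> // | n_gt0] := posnP n; rewrite -mulnSr prednK //; lia.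
have := pair_prod_sum_mults 0 s; have := double_sum_ord n.
rewrite size_s /dparam -/s; move: sum_c.
set R := (\sum_(i < n) rk i)%N; set pp := pair_prod_sum _; lia.
Qed.

Lemma size_pred_le_dparam : (0 < dparam A a)%N -> ((size A).-1 <= dparam A a)%N.
Proof.
rewrite /dparam -/s; have [n0|n_gt0] := posnP n.
  have s_nil : s = [::] by apply/nilP; rewrite /nilp size_s n0.
  by rewrite n0 s_nil /pair_prod_sum big_ord0.
by have := pair_prod_sum_mults_cases s; rewrite size_s; nia.
Qed.

Lemma later_copies_onto_ord (i : 'I_n) r : (r < count_mem (a i) s)%N ->
  exists i' : 'I_n, a i' = a i /\ rk i' = r.
Proof.
case/(later_copies_onto 0) => k; rewrite size_s => lt_k_n [nth_k <-].
exists (Ordinal lt_k_n); split=> //; rewrite -nth_k /s (nth_map i) ?size_enum_ord //.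
by congr (a _); apply: val_inj; rewrite /= nth_enum_ord.
Qed.

Lemma det_binom_sumset_exponent_neq0 :
  (forall i, a i != 0) -> (forall j : 'I_n, 'C((size A).-1, j)%:R != 0 :> F) ->
  \det (binom_mx sumset_exponent a) != 0.
Proof.
move=> a_neq0 binN_neq0.
have -> : binom_mx sumset_exponent a = binom_mx (fun i => (size A).-1 - rk i)%N a.
  by apply/matrixP => i j; rewrite !mxE mnmE.
apply: det_binom_mx_neq0 => // [|i|]; first exact: leq_trans le_n_A (leqSpred _).
  by have := rk_lt_n i; lia.
exact: later_copies_onto_ord.
Qed.

End RestrictedSums.

Unset Implicit Arguments.

Theorem mainTheorem2 (F : fieldType) (A : seq F) (n : nat) (a : 'I_n -> F)
  (hA : uniq A) (hn : n <= size A) (ha : forall i, a i != 0%R)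
  (hchar : ([pchar F]%R =i pred0) \/
           (exists p : nat, p \in [pchar F]%R /\ (dparam A a < p)%N)) :
  exists s : seq F, uniq s /\ (dparam A a).+1 <= size s /\
    (forall y, y \in s -> restricted_sum A a y).
Proof.
exists (restricted_sums A a); split; first exact: undup_uniq.
split; last exact: restricted_sumsP.
rewrite leqNgt; apply/negP => small_S.
have d_gt0 := leq_trans (size_restricted_sums_gt0 a hn) small_S.
have le_N_d := size_pred_le_dparam hn d_gt0.
have mdeg_c := mdeg_sumset_exponent a hn.
have := mcoeff_lin_form_exp_vdm a mdeg_c.
rewrite (mcoeff_lin_form_vdm_few_sums hA small_S (sumset_exponent_lt a hn) mdeg_c) mul0r.
apply/eqP; rewrite eq_sym !mulf_neq0 ?(fact_natr_neq0 hchar) //.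
  by apply/prodf_neq0 => i _; apply: (fact_natr_neq0 hchar); have := ltn_ord i; lia.
apply: det_binom_sumset_exponent_neq0 => // j.
by apply: (bin_natr_neq0 hchar le_N_d); have := ltn_ord j; lia.
Qed.
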